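(* Let $\alpha_1,\alpha_2\in[-1,1]$ with $\alpha_1\alpha_2<0$ and let $\lambda:=\mathrm i\sqrt{-\alpha_1\alpha_2}$. Then, for each choice of sign $\pm$, as $n\to\infty$, $$\sum_{j=2}^n\frac{\Gamma^2(j)}{\Gamma^2(j\pm\lambda)}=\frac{\Gamma^2(n+1)}{(1\mp2\lambda)\,n\,\Gamma^2(n\pm\lambda)}+O(\log n).$$
   Context: $\Gamma$ denotes the Gamma function (evaluated at complex arguments); $\Gamma^2(z)=(\Gamma(z))^2$. *)

From Stdlib Require Import Reals.
From Coquelicot Require Import Coquelicot.
Open Scope R_scope.

(* Complex power t^z := exp(z ln t) for real t > 0 and complex z,
   written out through Euler's formula. *)
Definition cpowR (t : R) (z : C) : C :=
  (exp (Re z * ln t) * cos (Im z * ln t), exp (Re z * ln t) * sin (Im z * ln t)).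

(* Euler's integral: Gamma z = \int_0^\infty t^(z-1) e^(-t) dt  (meaningful for Re z > 0,
   which covers every argument used in the statement). *)
Definition Gamma (z : C) : C :=
  @RInt_gen C_R_CompleteNormedModule
    (fun t => Cmult (cpowR t (Cminus z (RtoC 1))) (RtoC (exp (- t))))
    (at_right 0) (Rbar_locally p_infty).

(* For purely imaginary [a], put [F j = Gamma(j)^2 / Gamma(j + a)^2].  The functional
   equation [Gamma(z + 1) = z Gamma(z)] gives [F (n + 1) = F n (n / (n + a))^2], so [|F n|]
   is nonincreasing because [|n + a| >= n].  Since [(n / (n + a))^2 = 1 - 2 a / n + O(1/n^2)],
   the choice [c = 1 / (1 - 2 a)] makes the increments of [sum_(2<=j<=n) F j - c n F n] equal to
   [c a^2 F (n + 1) / n = O(1/n)], and summing them gives [O(log n)].  The functional equation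
   is obtained from Euler's integral by integration by parts, separately on the real and
   imaginary parts of the integrand. *)

From Stdlib Require Import Reals Lra Lia.
From Coquelicot Require Import Coquelicot.
Open Scope R_scope.

(** * Improper integrals over (0, +oo) *)

Lemma filter_prod_pos :
  filter_prod (at_right 0) (Rbar_locally p_infty) (fun ab => 0 < fst ab /\ 0 < snd ab).
Proof.
  apply Filter_prod with (fun a => 0 < a) (fun b => 0 < b); auto.
  - exact (filter_forall _ (fun a (Ha : 0 < a) => Ha)).
  - exists 0; auto.
Qed.

Lemma is_RInt_gen_of_filterlim {Fa Fb : (R -> Prop) -> Prop} {FFa : Filter Fa} {FFb : Filter Fb}
    (g : R -> R) (I : R * R -> R) (l : R) :
  filter_prod Fa Fb (fun ab => is_RInt g (fst ab) (snd ab) (I ab)) ->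
  filterlim I (filter_prod Fa Fb) (locally l) -> is_RInt_gen g Fa Fb l.
Proof.
  intros HI Hl P HP; unfold filtermapi.
  apply filter_imp with (fun ab => is_RInt g (fst ab) (snd ab) (I ab) /\ P (I ab)).
  - intros ab [Hab HPab]; exists (I ab); auto.
  - apply filter_and; [exact HI | exact (Hl P HP)].
Qed.

Lemma ex_RInt_pos (g : R -> R) (a b : R) :
  (forall t, 0 < t -> continuous g t) -> 0 < a -> 0 < b -> ex_RInt g a b.
Proof.
  intros Hg Ha Hb; apply (@ex_RInt_continuous R_CompleteNormedModule).
  intros t Ht; apply Hg.
  assert (0 < Rmin a b) by (apply Rmin_glb_lt; auto); lra.
Qed.

Lemma RInt_sub_RInt (g : R -> R) (a b a' b' : R) :
  (forall t, 0 < t -> continuous g t) -> 0 < a -> 0 < b -> 0 < a' -> 0 < b' ->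
  RInt g a' b' - RInt g a b = RInt g a' a + RInt g b b'.
Proof.
  intros Hg Ha Hb Ha' Hb'.
  assert (Hsplit : RInt g a' a + RInt g a b + RInt g b b' = RInt g a' b').
  { rewrite <- (RInt_Chasles g a' b b'), <- (RInt_Chasles g a' a b); auto using ex_RInt_pos. }
  lra.
Qed.

Lemma ex_RInt_gen_of_increment_bound (g E : R -> R) (C lE0 lEoo : R) : 0 <= C ->
  (forall t, 0 < t -> continuous g t) ->
  filterlim E (at_right 0) (locally lE0) ->
  filterlim E (Rbar_locally p_infty) (locally lEoo) ->
  (forall u v, 0 < u -> 0 < v -> Rabs (RInt g u v) <= C * Rabs (E u - E v)) ->
  exists l, is_RInt_gen g (at_right 0) (Rbar_locally p_infty) l.
Proof.
  intros HC Hg H0 Hoo Hbound.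
  assert (HF0 := at_right_proper_filter 0).
  assert (HFoo := Rbar_locally_filter p_infty).
  set (I := fun ab : R * R => RInt g (fst ab) (snd ab)).
  assert (Hcauchy : exists l,
            filterlim I (filter_prod (at_right 0) (Rbar_locally p_infty)) (locally l)).
  { apply filterlim_locally_cauchy; intros eps.
    assert (Hd : 0 < eps / (2 * C + 1)) by (apply Rdiv_lt_0_compat; [apply cond_pos | lra]).
    destruct (proj2 (filterlim_locally_cauchy E) (ex_intro _ lE0 H0) (mkposreal _ Hd))
      as [P0 [HP0 HE0]].
    destruct (proj2 (filterlim_locally_cauchy E) (ex_intro _ lEoo Hoo) (mkposreal _ Hd))
      as [Poo [HPoo HEoo]].
    exists (fun ab => (0 < fst ab /\ 0 < snd ab) /\ P0 (fst ab) /\ Poo (snd ab)); split.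
    { apply filter_and; [exact filter_prod_pos |].
      exact (Filter_prod _ _ _ P0 Poo HP0 HPoo (fun a b Ha Hb => conj Ha Hb)). }
    intros [a b] [a' b'] [[Ha Hb] [Ha0 Hboo]] [[Ha' Hb'] [Ha0' Hboo']]; cbn [fst snd] in *.
    specialize (HE0 a a' Ha0 Ha0'); specialize (HEoo b b' Hboo Hboo').
    change (Rabs (E a' - E a) < eps / (2 * C + 1)) in HE0.
    change (Rabs (E b' - E b) < eps / (2 * C + 1)) in HEoo.
    change (Rabs (RInt g a' b' - RInt g a b) < eps).
    rewrite RInt_sub_RInt by auto; rewrite Rabs_minus_sym in HEoo.
    assert (C * Rabs (E a' - E a) <= C * (eps / (2 * C + 1)))
      by (apply Rmult_le_compat_l; lra).
    assert (C * Rabs (E b - E b') <= C * (eps / (2 * C + 1)))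
      by (apply Rmult_le_compat_l; lra).
    assert (2 * C * (eps / (2 * C + 1)) < eps).
    { pose proof (cond_pos eps); apply Rmult_lt_reg_r with (2 * C + 1); [lra |].
      field_simplify; lra. }
    pose proof (Hbound a' a Ha' Ha); pose proof (Hbound b b' Hb Hb').
    eapply Rle_lt_trans; [apply Rabs_triang | lra]. }
  destruct Hcauchy as [l Hl]; exists l.
  apply is_RInt_gen_of_filterlim with I; auto.
  apply filter_imp with (2 := filter_prod_pos); intros [a b] [Ha Hb].
  apply (@RInt_correct R_CompleteNormedModule), ex_RInt_pos; auto.
Qed.

Lemma filterlim_exp_half_at_right_0 :
  filterlim (fun t => exp (- t / 2)) (at_right 0) (locally (exp (- 0 / 2))).
Proof.
  apply (filterlim_filter_le_1 _ (filter_le_within (F := locally 0) _)).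
  apply (@ex_derive_continuous R_AbsRing R_NormedModule (fun t => exp (- t / 2))).
  auto_derive; auto.
Qed.

Lemma filterlim_exp_half_p_infty :
  filterlim (fun t => exp (- t / 2)) (Rbar_locally p_infty) (locally 0).
Proof.
  apply filterlim_comp with (G := Rbar_locally m_infty); [| exact is_lim_exp_m].
  intros P [M HM]; exists (- 2 * M); intros t Ht; apply HM; lra.
Qed.

Lemma RInt_exp_dominated_le (g : R -> R) (C : R) : 0 <= C ->
  (forall t, 0 < t -> continuous g t) ->
  (forall t, 0 < t -> Rabs (g t) <= C * exp (- t / 2)) ->
  forall u v, 0 < u -> 0 < v ->
  Rabs (RInt g u v) <= 2 * C * Rabs (exp (- u / 2) - exp (- v / 2)).
Proof.
  intros HC Hg Hdom.
  assert (Hle : forall u v, 0 < u -> u <= v ->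
            Rabs (RInt g u v) <= 2 * C * (exp (- u / 2) - exp (- v / 2))).
  { intros u v Hu Huv.
    apply (norm_RInt_le g (fun t => C * exp (- t / 2)) u v); auto.
    - intros t Ht; apply Hdom; lra.
    - apply (@RInt_correct R_CompleteNormedModule), ex_RInt_pos; auto; lra.
    - replace (2 * C * (exp (- u / 2) - exp (- v / 2)))
        with ((- 2 * C * exp (- v / 2)) - (- 2 * C * exp (- u / 2))) by ring.
      apply (@is_RInt_derive R_CompleteNormedModule (fun t => - 2 * C * exp (- t / 2)));
        intros t _.
      + auto_derive; auto; unfold Rdiv; field.
      + apply (@ex_derive_continuous R_AbsRing R_NormedModule (fun t => C * exp (- t / 2))).
        auto_derive; auto. }
  intros u v Hu Hv.
  destruct (Rle_dec u v) as [Huv | Hvu].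
  - eapply Rle_trans; [apply Hle; auto |].
    apply Rmult_le_compat_l; [lra | apply Rle_abs].
  - rewrite <- (opp_RInt_swap g v u), Rabs_Ropp by (apply ex_RInt_pos; auto).
    eapply Rle_trans; [apply Hle; auto; lra |].
    rewrite Rabs_minus_sym; apply Rmult_le_compat_l; [lra | apply Rle_abs].
Qed.

Lemma ex_RInt_gen_exp_dominated (g : R -> R) (C : R) : 0 <= C ->
  (forall t, 0 < t -> continuous g t) ->
  (forall t, 0 < t -> Rabs (g t) <= C * exp (- t / 2)) ->
  exists l, is_RInt_gen g (at_right 0) (Rbar_locally p_infty) l.
Proof.
  intros HC Hg Hdom.
  apply (ex_RInt_gen_of_increment_bound g (fun t => exp (- t / 2)) (2 * C) _ _
           ltac:(lra) Hg filterlim_exp_half_at_right_0 filterlim_exp_half_p_infty).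
  exact (RInt_exp_dominated_le g C HC Hg Hdom).
Qed.

Lemma is_RInt_gen_derive_pos (phi D : R -> R) (la lb : R) :
  (forall t, 0 < t -> is_derive phi t (D t)) ->
  (forall t, 0 < t -> continuous D t) ->
  filterlim phi (at_right 0) (locally la) ->
  filterlim phi (Rbar_locally p_infty) (locally lb) ->
  is_RInt_gen D (at_right 0) (Rbar_locally p_infty) (lb - la).
Proof.
  intros Hd Hc Hla Hlb.
  apply is_RInt_gen_of_filterlim with (fun ab => phi (snd ab) - phi (fst ab)).
  - apply filter_imp with (2 := filter_prod_pos); intros [a b] [Ha Hb]; cbn [fst snd].
    assert (0 < Rmin a b) by (apply Rmin_glb_lt; auto).
    apply (@is_RInt_derive R_CompleteNormedModule phi D); intros t Ht;
      [apply Hd | apply Hc]; lra.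
  - apply (filterlim_comp _ _ _ (fun ab => (phi (snd ab), opp (phi (fst ab))))
             (fun p => plus (fst p) (snd p)) _ (filter_prod (locally lb) (locally (opp la)))).
    + apply filterlim_pair.
      * exact (filterlim_comp _ _ _ snd phi _ _ _ filterlim_snd Hlb).
      * apply (filterlim_comp _ _ _ (fun ab => phi (fst ab)) opp _ (locally la)).
        -- exact (filterlim_comp _ _ _ fst phi _ _ _ filterlim_fst Hla).
        -- exact (filterlim_opp la).
    + exact (filterlim_plus lb (opp la)).
Qed.

Lemma filterlim_0_of_Rabs_le {T : Type} {F : (T -> Prop) -> Prop} {FF : Filter F}
    (f g : T -> R) (C : R) : 0 <= C ->
  F (fun t => Rabs (f t) <= C * g t) -> filterlim g F (locally 0) ->
  filterlim f F (locally 0).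
Proof.
  intros HC Hfg Hg; apply filterlim_locally; intros eps.
  assert (Hd : 0 < eps / (C + 1)) by (apply Rdiv_lt_0_compat; [apply cond_pos | lra]).
  apply filter_imp
    with (2 := filter_and _ _ Hfg (proj1 (filterlim_locally g 0) Hg (mkposreal _ Hd))).
  intros t [Hle Hball]; change (Rabs (f t - 0) < eps).
  change (Rabs (g t - 0) < eps / (C + 1)) in Hball; rewrite Rminus_0_r in *.
  assert (C * g t <= C * (eps / (C + 1))).
  { apply Rmult_le_compat_l; [lra |]; apply Rabs_lt_between in Hball; lra. }
  assert (C * (eps / (C + 1)) < eps).
  { pose proof (cond_pos eps); apply Rmult_lt_reg_r with (C + 1); [lra |].
    field_simplify; lra. }
  lra.
Qed.

Lemma filterlim_exp_mul_ln_at_right_0 (x : R) :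
  0 < x -> filterlim (fun t => exp (x * ln t)) (at_right 0) (locally 0).
Proof.
  intros Hx.
  apply filterlim_comp with (G := Rbar_locally m_infty); [| exact is_lim_exp_m].
  apply (filterlim_comp _ _ _ ln (fun u => x * u) _ (Rbar_locally m_infty) _ is_lim_ln_0).
  intros P [M HM]; exists (M / x); intros u Hu; apply HM.
  apply Rmult_lt_reg_r with (/ x); [apply Rinv_0_lt_compat; auto |].
  replace (x * u * / x) with u by (field; lra); exact Hu.
Qed.

(** * The functional equation of Gamma *)

(* Generic in [w] so that a single integration by parts treats the [cos] and [sin] parts. *)
Definition gamma_integrand (w : R -> R) (x y t : R) : R :=
  exp ((x - 1) * ln t) * w (y * ln t) * exp (- t).

Lemma exp_mul_ln_mul_exp_le (r t : R) : 0 <= r -> 0 < t ->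
  exp (r * ln t) * exp (- t) <= exp (r * ln (2 * r + 2)) * exp (- t / 2).
Proof.
  intros Hr Ht; rewrite <- !exp_plus.
  set (k := 2 * r + 2).
  assert (Hk : 0 < k) by (unfold k; lra).
  assert (Hln : ln t - ln k <= t / k).
  { rewrite <- ln_div by auto.
    pose proof (exp_ineq1_le (ln (t / k))) as H.
    rewrite exp_ln in H by (apply Rdiv_lt_0_compat; auto); lra. }
  assert (Hrk : r * (t / k) <= t / 2).
  { unfold k; apply Rmult_le_reg_r with (2 * r + 2); [lra |].
    field_simplify; nra. }
  assert (Hle : r * ln t + - t <= r * ln k + - t / 2).
  { pose proof (Rmult_le_compat_l r _ _ Hr Hln); lra. }
  destruct (Req_dec (r * ln t + - t) (r * ln k + - t / 2)) as [-> | Hne]; [lra |].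
  left; apply exp_increasing; lra.
Qed.

Lemma continuous_gamma_integrand (w : R -> R) (x y t : R) :
  (forall s, continuous w s) -> 0 < t -> continuous (gamma_integrand w x y) t.
Proof.
  intros Hw Ht; unfold gamma_integrand.
  assert (Hln : continuous (fun t => y * ln t) t).
  { apply (continuous_scal_r y ln); apply continuous_ln; auto. }
  apply (continuous_mult (fun t => exp ((x - 1) * ln t) * w (y * ln t)) (fun t => exp (- t))).
  - apply (continuous_mult (fun t => exp ((x - 1) * ln t)) (fun t => w (y * ln t))).
    + apply continuous_exp_comp, (continuous_scal_r (x - 1) ln), continuous_ln; auto.
    + apply (continuous_comp (fun t => y * ln t) w); auto.
  - apply (@ex_derive_continuous R_AbsRing R_NormedModule (fun t => exp (- t))).
    auto_derive; auto.
Qed.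

Lemma Rabs_gamma_integrand_le (w : R -> R) (x y t : R) :
  (forall s, Rabs (w s) <= 1) ->
  Rabs (gamma_integrand w x y t) <= exp ((x - 1) * ln t) * exp (- t).
Proof.
  intros Hw; unfold gamma_integrand.
  rewrite !Rabs_mult, (Rabs_pos_eq (exp _)), (Rabs_pos_eq (exp (- t)))
    by (left; apply exp_pos).
  pose proof (Hw (y * ln t)); pose proof (exp_pos ((x - 1) * ln t)); pose proof (exp_pos (- t)).
  rewrite Rmult_assoc, (Rmult_comm (Rabs _)), <- Rmult_assoc.
  rewrite <- (Rmult_1_r (exp ((x - 1) * ln t) * exp (- t))) at 2.
  apply Rmult_le_compat_l; [apply Rmult_le_pos |]; lra.
Qed.

Lemma ex_RInt_gen_gamma_integrand (w : R -> R) (x y : R) :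
  1 <= x -> (forall s, continuous w s) -> (forall s, Rabs (w s) <= 1) ->
  exists l, is_RInt_gen (gamma_integrand w x y) (at_right 0) (Rbar_locally p_infty) l.
Proof.
  intros Hx Hwc Hw.
  apply ex_RInt_gen_exp_dominated with (exp ((x - 1) * ln (2 * (x - 1) + 2))).
  - left; apply exp_pos.
  - intros t Ht; apply continuous_gamma_integrand; auto.
  - intros t Ht; eapply Rle_trans; [apply Rabs_gamma_integrand_le; auto |].
    apply exp_mul_ln_mul_exp_le; auto; lra.
Qed.

Lemma filterlim_gamma_integrand_at_right_0 (w : R -> R) (x y : R) :
  1 < x -> (forall s, Rabs (w s) <= 1) ->
  filterlim (gamma_integrand w x y) (at_right 0) (locally 0).
Proof.
  intros Hx Hw.
  apply (filterlim_0_of_Rabs_le _ (fun t => exp ((x - 1) * ln t)) 1); [lra | |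
    apply filterlim_exp_mul_ln_at_right_0; lra].
  exists (mkposreal 1 Rlt_0_1); intros t _ Ht; simpl in Ht.
  eapply Rle_trans; [apply Rabs_gamma_integrand_le; auto |].
  assert (exp (- t) < 1) by (rewrite <- exp_0; apply exp_increasing; lra).
  pose proof (exp_pos ((x - 1) * ln t)); nra.
Qed.

Lemma filterlim_gamma_integrand_p_infty (w : R -> R) (x y : R) :
  1 <= x -> (forall s, Rabs (w s) <= 1) ->
  filterlim (gamma_integrand w x y) (Rbar_locally p_infty) (locally 0).
Proof.
  intros Hx Hw.
  apply (filterlim_0_of_Rabs_le _ (fun t => exp (- t / 2))
           (exp ((x - 1) * ln (2 * (x - 1) + 2)))); [left; apply exp_pos | |
    exact filterlim_exp_half_p_infty].
  exists 0; intros t Ht; eapply Rle_trans; [apply Rabs_gamma_integrand_le; auto |].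
  apply exp_mul_ln_mul_exp_le; lra.
Qed.

Lemma is_derive_gamma_integrand_succ (w w' : R -> R) (x y t : R) :
  (forall s, is_derive w s (w' s)) -> 0 < t ->
  is_derive (gamma_integrand w (x + 1) y) t
    (x * gamma_integrand w x y t + y * gamma_integrand w' x y t
     - gamma_integrand w (x + 1) y t).
Proof.
  intros Hw' Ht; unfold gamma_integrand.
  replace (x + 1 - 1) with x by ring; auto_derive.
  - repeat split; auto; exists (w' (y * ln t)); apply Hw'.
  - replace (Derive (fun s => w s) (y * ln t)) with (w' (y * ln t))
      by (symmetry; apply is_derive_unique, Hw').
    replace ((x - 1) * ln t) with (x * ln t + - ln t) by ring.
    rewrite exp_plus, (exp_Ropp (ln t)), exp_ln by auto; field; lra.
Qed.

Lemma is_RInt_gen_gamma_integrand_succ (w w' : R -> R) (x y l l' : R) :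
  0 < x -> (forall s, is_derive w s (w' s)) -> (forall s, continuous w' s) ->
  (forall s, Rabs (w s) <= 1) ->
  is_RInt_gen (gamma_integrand w x y) (at_right 0) (Rbar_locally p_infty) l ->
  is_RInt_gen (gamma_integrand w' x y) (at_right 0) (Rbar_locally p_infty) l' ->
  is_RInt_gen (gamma_integrand w (x + 1) y) (at_right 0) (Rbar_locally p_infty)
    (x * l + y * l').
Proof.
  intros Hx Hw' Hw'c Hw1 Hl Hl'.
  assert (Hwc : forall s, continuous w s).
  { intros s; apply (@ex_derive_continuous R_AbsRing R_NormedModule); exists (w' s); apply Hw'. }
  set (D := fun t => x * gamma_integrand w x y t + y * gamma_integrand w' x y t
                     - gamma_integrand w (x + 1) y t).
  assert (HDc : forall t, 0 < t -> continuous D t).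
  { intros t Ht; unfold D.
    apply (continuous_minus
             (fun t => x * gamma_integrand w x y t + y * gamma_integrand w' x y t)).
    - apply (continuous_plus (fun t => x * gamma_integrand w x y t)).
      + apply (continuous_scal_r x (gamma_integrand w x y)), continuous_gamma_integrand; auto.
      + apply (continuous_scal_r y (gamma_integrand w' x y)), continuous_gamma_integrand; auto.
    - apply continuous_gamma_integrand; auto. }
  assert (H0 := is_RInt_gen_derive_pos (gamma_integrand w (x + 1) y) D 0 0
                  (fun t => is_derive_gamma_integrand_succ w w' x y t Hw') HDc
                  (filterlim_gamma_integrand_at_right_0 w (x + 1) y ltac:(lra) Hw1)
                  (filterlim_gamma_integrand_p_infty w (x + 1) y ltac:(lra) Hw1)).
  rewrite Rminus_0_r in H0.
  replace (x * l + y * l') with (minus (plus (scal x l) (scal y l')) 0)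
    by (unfold minus, plus, opp, scal; simpl; unfold mult; simpl; ring).
  apply is_RInt_gen_ext with
    (2 := is_RInt_gen_minus _ _ _ _
            (is_RInt_gen_plus _ _ _ _ (is_RInt_gen_scal _ x _ Hl) (is_RInt_gen_scal _ y _ Hl'))
            H0).
  apply filter_forall; intros ab t _.
  unfold D, minus, plus, opp, scal; simpl; unfold mult; simpl; ring.
Qed.

Lemma Gamma_integrand_eq (x y t : R) :
  Cmult (cpowR t (Cminus (x, y) (RtoC 1))) (RtoC (exp (- t)))
  = (gamma_integrand cos x y t, gamma_integrand sin x y t).
Proof.
  unfold cpowR, gamma_integrand, Cminus, Cplus, Copp, Cmult, RtoC; simpl.
  replace (x + - (1)) with (x - 1) by ring; replace (y + - (0)) with y by ring.
  f_equal; ring.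
Qed.

Lemma is_RInt_gen_C_pair {Fa Fb : (R -> Prop) -> Prop} {FFa : Filter Fa} {FFb : Filter Fb}
    (f1 f2 : R -> R) (l1 l2 : R) :
  is_RInt_gen f1 Fa Fb l1 -> is_RInt_gen f2 Fa Fb l2 ->
  @is_RInt_gen C_R_NormedModule (fun t => (f1 t, f2 t) : C) Fa Fb (l1, l2).
Proof.
  intros H1 H2 P [eps HP].
  assert (G1 := H1 _ (locally_ball l1 eps)); assert (G2 := H2 _ (locally_ball l2 eps)).
  unfold filtermapi in *; apply filter_imp with (2 := filter_and _ _ G1 G2).
  intros ab [[y1 [Hy1 By1]] [y2 [Hy2 By2]]]; exists (y1, y2); split.
  - apply (@is_RInt_fct_extend_pair R_NormedModule R_NormedModule (fun t => (f1 t, f2 t))); auto.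
  - apply HP; split; auto.
Qed.

Lemma Gamma_eq_of_is_RInt_gen (x y l1 l2 : R) :
  is_RInt_gen (gamma_integrand cos x y) (at_right 0) (Rbar_locally p_infty) l1 ->
  is_RInt_gen (gamma_integrand sin x y) (at_right 0) (Rbar_locally p_infty) l2 ->
  Gamma (x, y) = (l1, l2).
Proof.
  intros H1 H2; unfold Gamma.
  apply (@is_RInt_gen_unique C_R_CompleteNormedModule (at_right 0) (Rbar_locally p_infty) _ _).
  apply (@is_RInt_gen_ext C_R_NormedModule (at_right 0) (Rbar_locally p_infty) _ _
           (fun t => (gamma_integrand cos x y t, gamma_integrand sin x y t) : C)).
  - apply filter_forall; intros ab t _; symmetry; apply Gamma_integrand_eq.
  - apply is_RInt_gen_C_pair; auto.
Qed.

Lemma Gamma_succ (z : C) : 1 <= Re z -> Gamma (Cplus z (RtoC 1)) = Cmult z (Gamma z).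
Proof.
  destruct z as [x y]; simpl; intros Hx.
  replace (Cplus (x, y) (RtoC 1)) with ((x + 1, y) : C)
    by (unfold Cplus, RtoC; simpl; f_equal; ring).
  assert (Hcos : forall s, Rabs (cos s) <= 1) by (intros s; apply Rabs_le, COS_bound).
  assert (Hsin : forall s, Rabs (sin s) <= 1) by (intros s; apply Rabs_le, SIN_bound).
  destruct (ex_RInt_gen_gamma_integrand cos x y Hx continuous_cos Hcos) as [l1 H1].
  destruct (ex_RInt_gen_gamma_integrand sin x y Hx continuous_sin Hsin) as [l2 H2].
  assert (H2' : is_RInt_gen (gamma_integrand (fun s => - sin s) x y)
                  (at_right 0) (Rbar_locally p_infty) (- l2)).
  { apply (is_RInt_gen_ext (fun t => opp (gamma_integrand sin x y t))).
    - apply filter_forall; intros ab t _; unfold opp, gamma_integrand; simpl; ring.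
    - exact (is_RInt_gen_opp _ _ H2). }
  assert (Hcos' : forall s, continuous (fun s => - sin s) s).
  { intros s; apply (continuous_opp sin), continuous_sin. }
  rewrite (Gamma_eq_of_is_RInt_gen x y l1 l2 H1 H2).
  rewrite (Gamma_eq_of_is_RInt_gen (x + 1) y (x * l1 + y * - l2) (x * l2 + y * l1)).
  - unfold Cmult; simpl; f_equal; ring.
  - apply (is_RInt_gen_gamma_integrand_succ cos (fun s => - sin s));
      auto using is_derive_cos; lra.
  - apply (is_RInt_gen_gamma_integrand_succ sin cos);
      auto using is_derive_sin, continuous_cos; lra.
Qed.

Lemma Gamma_nat_succ (n : nat) : (1 <= n)%nat ->
  Gamma (RtoC (INR (S n))) = Cmult (RtoC (INR n)) (Gamma (RtoC (INR n))).
Proof.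
  intros Hn; assert (1 <= INR n) by (apply (le_INR 1); auto).
  rewrite S_INR, RtoC_plus, <- Gamma_succ by (simpl; lra); reflexivity.
Qed.

Lemma Gamma_nat_add_succ (a : C) (n : nat) : 0 <= Re a -> (1 <= n)%nat ->
  Gamma (Cplus (RtoC (INR (S n))) a)
  = Cmult (Cplus (RtoC (INR n)) a) (Gamma (Cplus (RtoC (INR n)) a)).
Proof.
  intros Ha Hn; assert (1 <= INR n) by (apply (le_INR 1); auto).
  rewrite <- Gamma_succ by (rewrite re_plus, re_RtoC; lra).
  rewrite S_INR, RtoC_plus; f_equal; ring.
Qed.

(** * The discrete estimate *)

Lemma inv_le_2_ln_succ (n : nat) : (1 <= n)%nat -> / INR n <= 2 * (ln (INR (S n)) - ln (INR n)).
Proof.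
  intros Hn; rewrite S_INR.
  assert (Hx : 1 <= INR n) by (apply (le_INR 1); auto).
  set (x := INR n) in *.
  pose proof (exp_ineq1_le (ln (x / (x + 1)))) as H.
  rewrite exp_ln, ln_div in H by (try apply Rdiv_lt_0_compat; lra).
  assert (/ x <= 2 * / (x + 1)).
  { apply Rmult_le_reg_r with (x * (x + 1)); [nra |]; field_simplify; lra. }
  replace (x / (x + 1)) with (1 - / (x + 1)) in H by (field; lra).
  lra.
Qed.

Lemma le_ln_of_increments (d : nat -> R) (B : R) : 0 <= B ->
  (forall n, (2 <= n)%nat -> d (S n) <= d n + B / INR n) ->
  forall n, (2 <= n)%nat -> d n <= d 2%nat + 2 * B * ln (INR n).
Proof.
  intros HB Hd n Hn; induction Hn as [| n Hn IH].
  - assert (0 <= ln (INR 2)) by (rewrite <- ln_1; apply ln_le; simpl; lra).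
    pose proof (Rmult_le_pos _ _ HB H); lra.
  - pose proof (inv_le_2_ln_succ n ltac:(lia)).
    pose proof (Rmult_le_compat_l B _ _ HB H).
    specialize (Hd n Hn); unfold Rdiv in Hd; lra.
Qed.

(* No side conditions, thanks to the convention [/ 0 = 0]. *)
Lemma Cinv_mult (x y : C) : Cinv (Cmult x y) = Cmult (Cinv x) (Cinv y).
Proof.
  destruct x as [x1 x2], y as [y1 y2]; unfold Cinv, Cmult; simpl.
  replace ((x1 * y1 - x2 * y2) * ((x1 * y1 - x2 * y2) * 1)
           + (x1 * y2 + x2 * y1) * ((x1 * y2 + x2 * y1) * 1))
    with ((x1 * (x1 * 1) + x2 * (x2 * 1)) * (y1 * (y1 * 1) + y2 * (y2 * 1))) by ring.
  unfold Rdiv; rewrite Rinv_mult; f_equal; ring.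
Qed.

Lemma Rabs_le_Cmod_add_imag (r : R) (a : C) : Re a = 0 -> Rabs r <= Cmod (Cplus (RtoC r) a).
Proof.
  intros Ha; eapply Rle_trans; [| apply re_le_Cmod].
  rewrite re_plus, Ha, re_RtoC, Rplus_0_r; lra.
Qed.

Lemma neq_0_of_Re (z : C) : Re z <> 0 -> z <> RtoC 0.
Proof. intros Hz E; apply Hz; rewrite E; reflexivity. Qed.

Lemma Cdiv_sq_mult (u v p q : C) :
  Cdiv (Cpow (Cmult u v) 2) (Cpow (Cmult p q) 2)
  = Cmult (Cdiv (Cpow v 2) (Cpow q 2)) (Cpow (Cdiv u p) 2).
Proof.
  unfold Cdiv; simpl; rewrite !Cmult_1_r, !Cinv_mult; ring.
Qed.

Lemma Cdiv_sq_scale (k d u v : C) : k <> RtoC 0 -> d <> RtoC 0 ->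
  Cdiv (Cpow (Cmult k u) 2) (Cmult (Cmult d k) (Cpow v 2))
  = Cmult (Cmult (Cinv d) k) (Cdiv (Cpow u 2) (Cpow v 2)).
Proof.
  intros Hk Hd; unfold Cdiv; rewrite Cinv_mult.
  generalize (Cinv (Cpow v 2)); intros w; field; auto.
Qed.

Section ImaginaryShift.

Variable a : C.
Hypothesis Ha : Re a = 0.
Variable F : nat -> C.
Hypothesis HF : forall n, (1 <= n)%nat ->
  F (S n) = Cmult (F n) (Cpow (Cdiv (RtoC (INR n)) (Cplus (RtoC (INR n)) a)) 2).

Let c := Cinv (Cminus (RtoC 1) (Cmult (RtoC 2) a)).
Let remainder (n : nat) :=
  Cminus (sum_n_m F 2 n) (Cmult (Cmult c (RtoC (INR n))) (F n)).

Lemma one_sub_2_imag_neq_0 : Cminus (RtoC 1) (Cmult (RtoC 2) a) <> RtoC 0.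
Proof.
  apply neq_0_of_Re; unfold Cminus.
  rewrite re_plus, re_opp, re_RtoC, re_scal_l, Ha; lra.
Qed.

Lemma nat_add_imag_neq_0 (n : nat) : (1 <= n)%nat -> Cplus (RtoC (INR n)) a <> RtoC 0.
Proof.
  intros Hn; apply neq_0_of_Re; rewrite re_plus, Ha, re_RtoC, Rplus_0_r.
  apply not_0_INR; lia.
Qed.

Lemma Cmod_shift_ratio_le_1 (n : nat) :
  (1 <= n)%nat -> Cmod (Cdiv (RtoC (INR n)) (Cplus (RtoC (INR n)) a)) <= 1.
Proof.
  intros Hn; assert (Hn1 : 1 <= INR n) by (apply (le_INR 1); auto).
  pose proof (Rabs_le_Cmod_add_imag (INR n) a Ha) as Hmod.
  rewrite Rabs_pos_eq in Hmod by lra.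
  rewrite Cmod_div, Cmod_R, Rabs_pos_eq by (auto using nat_add_imag_neq_0 || lra).
  apply Rmult_le_reg_r with (Cmod (Cplus (RtoC (INR n)) a)); [lra |].
  unfold Rdiv; rewrite Rmult_assoc, Rinv_l; lra.
Qed.

Lemma Cmod_le_Cmod_2 (n : nat) : (2 <= n)%nat -> Cmod (F n) <= Cmod (F 2%nat).
Proof.
  intros Hn; induction Hn as [| n Hn IH]; [lra |].
  rewrite HF, Cmod_mult, Cmod_pow by lia.
  pose proof (Cmod_shift_ratio_le_1 n ltac:(lia)); pose proof (Cmod_ge_0 (F n)).
  pose proof (Cmod_ge_0 (Cdiv (RtoC (INR n)) (Cplus (RtoC (INR n)) a))).
  assert (Cmod (Cdiv (RtoC (INR n)) (Cplus (RtoC (INR n)) a)) ^ 2 <= 1) by nra.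
  nra.
Qed.

Lemma remainder_succ (n : nat) : (2 <= n)%nat ->
  remainder (S n)
  = Cplus (remainder n) (Cmult (Cmult c (Cpow a 2)) (Cmult (F (S n)) (RtoC (/ INR n)))).
Proof.
  intros Hn; assert (Hn0 : INR n <> 0) by (apply not_0_INR; lia).
  assert (Hn0C : RtoC (INR n) <> RtoC 0) by (apply neq_0_of_Re; auto).
  pose proof (nat_add_imag_neq_0 n ltac:(lia)); pose proof one_sub_2_imag_neq_0.
  unfold remainder, c; rewrite sum_n_Sm, HF, S_INR, RtoC_plus, RtoC_inv by (lia || lra).
  change plus with Cplus; field; auto.
Qed.

Lemma Cmod_remainder_le_ln :
  exists K N, forall n, (N <= n)%nat -> Cmod (remainder n) <= K * ln (INR n).
Proof.
  set (B := Cmod c * Cmod (Cpow a 2) * Cmod (F 2%nat)).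
  assert (HB : 0 <= B) by (repeat apply Rmult_le_pos; apply Cmod_ge_0).
  assert (Hinc : forall n, (2 <= n)%nat ->
            Cmod (remainder (S n)) <= Cmod (remainder n) + B / INR n).
  { intros n Hn; rewrite remainder_succ by auto.
    eapply Rle_trans; [apply Cmod_triangle |]; apply Rplus_le_compat_l.
    assert (Hn0 : 0 < INR n) by (apply lt_0_INR; lia).
    rewrite !Cmod_mult, Cmod_R, Rabs_pos_eq by (left; apply Rinv_0_lt_compat; auto).
    unfold B, Rdiv; rewrite <- Rmult_assoc.
    apply Rmult_le_compat_r; [left; apply Rinv_0_lt_compat; auto |].
    apply Rmult_le_compat_l; [apply Rmult_le_pos; apply Cmod_ge_0 |].
    apply Cmod_le_Cmod_2; lia. }
  exists (Cmod (remainder 2%nat) + 2 * B), 3%nat; intros n Hn.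
  assert (Hln : 1 <= ln (INR n)).
  { rewrite <- (ln_exp 1); apply ln_le; [apply exp_pos |].
    pose proof exp_le_3; apply (le_INR 3) in Hn; simpl in Hn; lra. }
  pose proof (le_ln_of_increments (fun n => Cmod (remainder n)) B HB Hinc n ltac:(lia)).
  pose proof (Cmod_ge_0 (remainder 2%nat)); nra.
Qed.

End ImaginaryShift.

Theorem lemma3p4 (alpha1 alpha2 : R) :
  -1 <= alpha1 <= 1 -> -1 <= alpha2 <= 1 -> alpha1 * alpha2 < 0 ->
  let lambda : C := (0, sqrt (- (alpha1 * alpha2))) in
  forall s : R, (s = 1 \/ s = -1) ->
  exists K : R, exists N : nat, forall n : nat, (N <= n)%nat ->
    Cmod (Cminus
      (sum_n_m (fun j : nat =>
          Cdiv (Cpow (Gamma (RtoC (INR j))) 2)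
               (Cpow (Gamma (Cplus (RtoC (INR j)) (Cmult (RtoC s) lambda))) 2)) 2 n)
      (Cdiv (Cpow (Gamma (RtoC (INR (n + 1)))) 2)
            (Cmult (Cmult (Cminus (RtoC 1) (Cmult (RtoC (2 * s)) lambda)) (RtoC (INR n)))
                   (Cpow (Gamma (Cplus (RtoC (INR n)) (Cmult (RtoC s) lambda))) 2))))
    <= K * ln (INR n).
Proof.
  intros _ _ _ lambda s _.
  set (a := Cmult (RtoC s) lambda).
  assert (Ha : Re a = 0) by (unfold a, lambda; simpl; ring).
  set (F := fun j : nat => Cdiv (Cpow (Gamma (RtoC (INR j))) 2)
                                (Cpow (Gamma (Cplus (RtoC (INR j)) a)) 2)).
  destruct (Cmod_remainder_le_ln a Ha F) as [K [N HK]].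
  { intros n Hn; unfold F.
    rewrite Gamma_nat_succ, Gamma_nat_add_succ by (auto || lra); apply Cdiv_sq_mult. }
  exists K, (max N 1); intros n Hn.
  replace (Cmult (RtoC (2 * s)) lambda) with (Cmult (RtoC 2) a)
    by (unfold a; rewrite RtoC_mult; ring).
  rewrite Nat.add_1_r, Gamma_nat_succ by lia; rewrite Cdiv_sq_scale.
  - apply HK; lia.
  - apply neq_0_of_Re; simpl; apply not_0_INR; lia.
  - apply one_sub_2_imag_neq_0; auto.
Qed.
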